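(* Let $m\ge1$, $n>1$ be integers and $1\le l<(n-1)/2$. If $(x,y,z)\in\mathbb{C}^3$ satisfies $v(x,y,z)=2\cos\frac{2l\pi}{n-1}$ and $S_m(z)-vS_{m-1}(z)=0$, then $v=2\cos\frac{2l\pi}{n-1}\in\mathbb{R}$ and $$z=-v^3+v^2xy-v(x^2+y^2-3)+xy.$$ Hence the set of such points contains no point of the form $(2,2,z)$ with $z\notin\mathbb{R}$.
   Context: $S_k(q)$ are the Chebyshev polynomials defined for all integers $k$ by $S_0=1$, $S_1=q$, $S_{k+1}=qS_k-S_{k-1}$. Here $v(x,y,z)=\big(xS_m(z)-yS_{m-1}(z)\big)\big(yS_m(z)-xS_{m-1}(z)\big)-z\big(S_m^2(z)+S_{m-1}^2(z)\big)+4S_m(z)S_{m-1}(z)$. *)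

From HB Require Import structures.
From mathcomp Require Import all_boot all_order all_algebra.
From mathcomp Require Import complex.
From mathcomp Require Import reals trigo.
Set Implicit Arguments. Unset Strict Implicit. Unset Printing Implicit Defensive.
Import Order.TTheory GRing.Theory Num.Theory.
Local Open Scope ring_scope.

(* Chebyshev polynomials S_0 = 1, S_1 = q, S_{k+1} = q S_k - S_{k-1}
   (only nonnegative indices are needed: m >= 1). *)
Fixpoint cheb {R : pzRingType} (k : nat) (q : R) : R :=
  match k with
  | 0%N => 1
  | k'.+1 => match k' with
             | 0%N => q
             | k''.+1 => q * cheb k' q - cheb k'' q
             end
  end.

Definition vfun {R : comPzRingType} (m : nat) (x y z : R) : R :=
  (x * cheb m z - y * cheb m.-1 z) * (y * cheb m z - x * cheb m.-1 z)
  - z * (cheb m z ^+ 2 + cheb m.-1 z ^+ 2) + 4 * cheb m z * cheb m.-1 z.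

From HB Require Import structures.
From mathcomp Require Import all_boot all_order all_algebra.
From mathcomp Require Import complex.
From mathcomp Require Import reals trigo.
From mathcomp Require Import ring.
Set Implicit Arguments. Unset Strict Implicit. Unset Printing Implicit Defensive.
Import Order.TTheory GRing.Theory Num.Theory.
Local Open Scope ring_scope.
Local Open Scope complex_scope.

(* Write a = S_m(z), b = S_{m-1}(z).  The Cassini identity
   a^2 - z a b + b^2 = 1 together with a = v b gives b^2 (v^2 - z v + 1) = 1,
   so b^2 is invertible, and vfun(x,y,z) = b^2 ((x v - y)(y v - x) - z (v^2 + 1) + 4 v).
   If moreover vfun(x,y,z) = v, eliminating b^2 between these two relations,
   both linear in z, leaves the claimed formula for z.  Since v is real, that
   formula is a real polynomial in x and y, hence real at x = y = 2; the
   constraints on n and l play no further role. *)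

Lemma chebSS (R : pzRingType) (k : nat) (q : R) :
  cheb k.+2 q = q * cheb k.+1 q - cheb k q.
Proof. by []. Qed.

Lemma cheb_cassini (R : comPzRingType) (k : nat) (z : R) :
  cheb k.+1 z ^+ 2 - z * cheb k.+1 z * cheb k z + cheb k z ^+ 2 = 1.
Proof.
elim: k => [|k IH]; first by rewrite /=; ring.
by rewrite -[RHS]IH chebSS; ring.
Qed.

Section ChebRatio.

Variables (R : comPzRingType) (k : nat) (v z : R).
Hypothesis cheb_ratio : cheb k.+1 z = v * cheb k z.

Lemma cheb_ratio_unit : cheb k z ^+ 2 * (v ^+ 2 - z * v + 1) = 1.
Proof. by rewrite -[RHS](cheb_cassini k z) cheb_ratio; ring. Qed.

Lemma vfun_cheb_ratio (x y : R) :
  vfun k.+1 x y z =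
  cheb k z ^+ 2 * ((x * v - y) * (y * v - x) - z * (v ^+ 2 + 1) + 4 * v).
Proof. by rewrite /vfun /= -/(cheb k.+1 z) cheb_ratio; ring. Qed.

Lemma vfun_fixpoint_cheb_ratio (x y : R) :
  vfun k.+1 x y z = v ->
  z = - v ^+ 3 + v ^+ 2 * x * y - v * (x ^+ 2 + y ^+ 2 - 3) + x * y.
Proof.
rewrite vfun_cheb_ratio => hv; apply/eqP; rewrite -subr_eq0; apply/eqP.
set c := cheb k z ^+ 2 in hv *; set Q := (X in z - X).
have hc : c * (v ^+ 2 - z * v + 1) = 1 by exact: cheb_ratio_unit.
have cQ : c * (z - Q) = v * (c * (v ^+ 2 - z * v + 1) - 1) + v - c *
    ((x * v - y) * (y * v - x) - z * (v ^+ 2 + 1) + 4 * v) by rewrite /Q; ring.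
by rewrite -[z - Q]mul1r -hc -mulrA mulrCA cQ hc hv subrr mulr0 add0r subrr mulr0.
Qed.

End ChebRatio.

Theorem lemma4p13 (R : realType) (m n l : nat) (x y z : R[i]) :
  (1 <= m)%N -> (1 < n)%N -> (1 <= l)%N -> (l.*2 < n.-1)%N ->
  vfun m x y z = (2 * cos (2 * l%:R * pi / (n.-1)%:R))%:C ->
  cheb m z - vfun m x y z * cheb m.-1 z = 0 ->
  vfun m x y z = (2 * cos (2 * l%:R * pi / (n.-1)%:R))%:C /\
  vfun m x y z \is Num.real /\
  z = - vfun m x y z ^+ 3 + vfun m x y z ^+ 2 * x * y
      - vfun m x y z * (x ^+ 2 + y ^+ 2 - 3) + x * y /\
  (x = 2 -> y = 2 -> z \is Num.real).
Proof.
case: m => [//|k] _ _ _ _ hv /subr0_eq hratio.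
have vreal : vfun k.+1 x y z \is Num.real.
  by rewrite hv; apply/complex_realP; eexists.
have hz := vfun_fixpoint_cheb_ratio hratio erefl.
split=> //; split=> //; split=> // hx hy.
move: (vfun k.+1 x y z) vreal hz => v vreal ->.
by rewrite hx hy !(rpredD, rpredB, rpredM, rpredN, rpredX, rpred1).
Qed.
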